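(* In a $\$$-bounded contract, for all $\mathcal{A}\subseteq\mathbb{A}$, all mempools $\mathcal{P}\subseteq\mathbb{X}$ and all states $s$, there exists a finite $\mathcal{P}_0\subseteq\mathcal{P}$ such that $\mathrm{MEV}_{\mathcal{A}}(s,\mathcal{P}_0)=\mathrm{MEV}_{\mathcal{A}}(s,\mathcal{P})$.
   Context: Fix a countably infinite set $\mathbb{A}$ of actors, a set $\mathbb{T}$ of token types and a set $\mathbb{X}$ of transactions. A wallet is a function $\mathbb{T}\to\mathbb{N}$; $\mathbb{W}_{\mathrm{fin}}$ is the set of finite-support wallets. A wallet state is $W:\mathbb{A}\to(\mathbb{T}\to\mathbb{N})$ satisfying the finite tokens axiom $\sum_{\tau}\sum_{a\in\mathbb{A}}W(a)(\tau)\in\mathbb{N}$. A contract consists of blockchain states $\mathbb{S}=\mathbb{C}\times\mathbb{W}$ (contract state, wallet state), a partial transition function $\mapsto:(\mathbb{S}\times\mathbb{X})\rightharpoonup\mathbb{S}$ and initial states $\mathbb{S}_0$. A transaction $x$ is valid in $s$ if $s\xmapsto{x}s'$ for some $s'$. For finite sequences, $s\xrightarrow{\varepsilon}s$, and $s\xrightarrow{\vec{Y}x}s'$ iff either $s\xrightarrow{\vec{Y}}s''\xmapsto{x}s'$, or $s\xrightarrow{\vec{Y}}s'$ and $x$ is not valid in $s'$. States are assumed reachable from $\mathbb{S}_0$. $W_{\mathcal{A}}(s)=\sum_{a\in\mathcal{A}}W(s)(a)$. A wealth function is an additive map $\$:\mathbb{W}_{\mathrm{fin}}\to\mathbb{N}$;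 $\$_{\mathcal{A}}(s)=\$(W_{\mathcal{A}}(s))$; the gain is $G_{\mathcal{A}}(s,\vec{X})=\$_{\mathcal{A}}(s')-\$_{\mathcal{A}}(s)$ where $s\xrightarrow{\vec X}s'$. The contract is $\$$-bounded if for every $s_0\in\mathbb{S}_0$ there is $n$ such that $\$_{\mathbb{A}}(s)<n$ for all $s$ reachable from $s_0$. A transaction deducibility function $\kappa:\mathcal{P}(\mathbb{A})\times\mathcal{P}(\mathbb{X})\to\mathcal{P}(\mathbb{X})$, $(\mathcal{A},\mathcal{X})\mapsto\kappa_{\mathcal{A}}(\mathcal{X})$, satisfies: extensivity $\mathcal{X}\subseteq\kappa_{\mathcal{A}}(\mathcal{X})$; idempotence $\kappa_{\mathcal{A}}(\kappa_{\mathcal{A}}(\mathcal{X}))=\kappa_{\mathcal{A}}(\mathcal{X})$; monotonicity in both arguments; continuity $\kappa_{\mathcal{A}}(\bigcup_i\mathcal{X}_i)=\bigcup_i\kappa_{\mathcal{A}}(\mathcal{X}_i)$ for increasing chains; finite causes (every finite $\mathcal{X}_0$ is contained in $\kappa_{\mathcal{A}_0}(\emptyset)$ for some finite $\mathcal{A}_0$); private knowledge ($\kappa_{\mathcal{A}}(\emptyset)\subseteq\kappa_{\mathcal{A}'}(\emptyset)$ implies $\mathcal{A}\subseteq\mathcal{A}'$); no shared secrets ($\kappa_{\mathcal{A}}(\mathcal{X})\cap\kappa_{\mathcal{B}}(\mathcal{X})\subseteq\kappa_{\mathcal{A}\cap\mathcal{B}}(\mathcal{X})$). $\mathcal{X}^*$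 denotes finite sequences over $\mathcal{X}$. The unrealized gain is $\mathrm{uG}_{\mathcal{A}}(s)=\max\{G_{\mathcal{A}}(s,\vec{Y}):\vec{Y}\in\kappa_{\mathcal{A}}(\emptyset)^*\}$; the external gain is $\mathrm{xG}_{\mathcal{A}}(s,\vec{Y})=G_{\mathcal{A}}(s,\vec{Y})-\mathrm{uG}_{\mathcal{A}}(s)$; $\mathrm{MEV}_{\mathcal{A}}(s,\mathcal{P})=\max\{\mathrm{xG}_{\mathcal{A}}(s,\vec{Y}):\vec{Y}\in\kappa_{\mathcal{A}}(\mathcal{P})^*\}$. *)

From mathcomp Require Import all_boot all_order all_algebra.
From mathcomp Require Import boolp classical_sets functions cardinality fsbigop.

Set Implicit Arguments.
Unset Strict Implicit.
Unset Printing Implicit Defensive.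

Import Order.TTheory GRing.Theory Num.Theory.
Local Open Scope classical_set_scope.

Section Model.
Variables (actor : choiceType) (tok : Type) (tx : Type).

Definition wallet := tok -> nat.

Definition fin_supp_wallet (w : wallet) : Prop := finite_set [set t | w t <> 0%N].

(** Finite tokens axiom: sum_tau sum_a W(a)(tau) is a natural number
    (an infinite sum of naturals is finite iff finitely many summands are nonzero). *)
Definition finite_tokens (W : actor -> wallet) : Prop :=
  finite_set [set p : actor * tok | W p.1 p.2 <> 0%N].

Definition wstate := {W : actor -> wallet | finite_tokens W}.

Record contract := Contract {
  cstate : Type;
  step : cstate * wstate -> tx -> option (cstate * wstate);
  init : set (cstate * wstate)
}.
Arguments init : clear implicits.

Definition bstate (C : contract) := (cstate C * wstate)%type.

Definition Wof (C : contract) (s : bstate C) : actor -> wallet := proj1_sig s.2.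

(** Execution of a finite sequence: invalid transactions are skipped. *)
Definition exec (C : contract) (s : bstate C) (Y : seq tx) : bstate C :=
  foldl (fun s x => odflt s (step s x)) s Y.

Definition reachable_from (C : contract) (s0 s : bstate C) : Prop :=
  exists Y : seq tx, exec s0 Y = s.

Definition reachable (C : contract) (s : bstate C) : Prop :=
  exists2 s0, init C s0 & reachable_from s0 s.

Definition W_set (C : contract) (A : set actor) (s : bstate C) : wallet :=
  fun t => \big[addn/0%N]_(a \in A) Wof s a t.

Definition wealth_fun (w : wallet -> nat) : Prop :=
  forall w1 w2 : wallet, fin_supp_wallet w1 -> fin_supp_wallet w2 ->
    w (fun t => (w1 t + w2 t)%N) = (w w1 + w w2)%N.

Definition wealthA (wf : wallet -> nat) (C : contract) (A : set actor) (s : bstate C) : nat :=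
  wf (W_set A s).

Definition bounded (wf : wallet -> nat) (C : contract) : Prop :=
  forall s0, init C s0 -> exists n : nat, forall s, reachable_from s0 s ->
    (wealthA wf [set: actor] s < n)%N.

Definition gain (wf : wallet -> nat) (C : contract) (A : set actor) (s : bstate C)
    (Y : seq tx) : int :=
  ((wealthA wf A (exec s Y))%:Z - (wealthA wf A s)%:Z)%R.

Definition is_chain (K : set (set tx)) : Prop :=
  forall X1 X2, K X1 -> K X2 -> X1 `<=` X2 \/ X2 `<=` X1.

Record tdf (kappa : set actor -> set tx -> set tx) : Prop := Tdf {
  tdf_extensive : forall A X, X `<=` kappa A X;
  tdf_idempotent : forall A X, kappa A (kappa A X) = kappa A X;
  tdf_monotone : forall A A' X X', A `<=` A' -> X `<=` X' -> kappa A X `<=` kappa A' X';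
  tdf_continuous : forall A (K : set (set tx)), K !=set0 -> is_chain K ->
      kappa A (\bigcup_(X in K) X) = \bigcup_(X in K) kappa A X;
  tdf_finite_causes : forall X0 : set tx, finite_set X0 ->
      exists2 A0 : set actor, finite_set A0 & X0 `<=` kappa A0 set0;
  tdf_private_knowledge : forall A A', kappa A set0 `<=` kappa A' set0 -> A `<=` A';
  tdf_no_shared_secrets : forall A B X, kappa A X `&` kappa B X `<=` kappa (A `&` B) X
}.

Fixpoint all_in (X : set tx) (Y : seq tx) : Prop :=
  if Y is x :: Y' then X x /\ all_in X Y' else True.
Definition seq_over (X : set tx) : set (seq tx) := [set Y | all_in X Y].

(** Maximum of a set of integers (chosen classically; 0 if no maximum exists). *)
Definition is_max (S : set int) (m : int) : Prop := S m /\ forall x, S x -> (x <= m)%R.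
Definition maxZ (S : set int) : int := xget 0%R (is_max S).

Definition uG (wf : wallet -> nat) (C : contract) (kappa : set actor -> set tx -> set tx)
    (A : set actor) (s : bstate C) : int :=
  maxZ [set gain wf A s Y | Y in seq_over (kappa A set0)].

Definition xG (wf : wallet -> nat) (C : contract) (kappa : set actor -> set tx -> set tx)
    (A : set actor) (s : bstate C) (Y : seq tx) : int :=
  (gain wf A s Y - uG wf kappa A s)%R.

Definition MEV (wf : wallet -> nat) (C : contract) (kappa : set actor -> set tx -> set tx)
    (A : set actor) (s : bstate C) (P : set tx) : int :=
  maxZ [set xG wf kappa A s Y | Y in seq_over (kappa A P)].

End Model.

From mathcomp Require Import all_boot all_order all_algebra.
From mathcomp Require Import boolp classical_sets functions cardinality fsbigop.
Local Open Scope classical_set_scope.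

Set Implicit Arguments.
Unset Strict Implicit.

(* The heart of the proof is a compactness property of transaction
   deducibility functions: whatever A deduces from a mempool P is already
   deduced from some finite part of P.  Continuity of kappa only speaks about
   chains, so compactness is obtained by Zorn's lemma: a maximal subset Q of P
   from which no finite extension inside P deduces x must be all of P, which
   contradicts x \in kappa_A(P).  Compactness lifts to finite sequences of
   transactions, one transaction at a time.

   MEV is a maximum over kappa_A(P)^*.  If the maximum is attained by some Y,
   take P0 finite with Y \in kappa_A(P0)^*: by monotonicity the maximum over
   the smaller set kappa_A(P0)^* is still attained at Y.  If no maximum
   exists, MEV_A(s,P) is the conventional value 0, and so is MEV_A(s,\emptyset)
   (an external gain over deducible sequences is never positive); P0 = \emptyset
   then works. *)

Lemma all_in_mono (tx : Type) (X X' : set tx) (Y : seq tx) :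
  X `<=` X' -> all_in X Y -> all_in X' Y.
Proof. by move=> XX'; elim: Y => //= x Y IH [Xx HY]; split; [exact: XX'|exact: IH]. Qed.

Section Compactness.
Variables (actor : choiceType) (tx : Type).
Variables (kappa : set actor -> set tx -> set tx) (kappa_tdf : tdf kappa).
Variables (A : set actor) (P : set tx) (x : tx).

(* Q is a subset of P such that x stays non-deducible after adding any finite
   part of P; the empty set is such a set exactly when compactness fails. *)
Definition finitely_blind (Q : set tx) : Prop :=
  Q `<=` P /\ forall G, finite_set G -> G `<=` P -> ~ kappa A (Q `|` G) x.

(* By continuity of kappa, blindness is preserved by unions of chains. *)
Lemma finitely_blind_bigcup (F : set (set tx)) :
  F `<=` finitely_blind -> total_on F subset ->
  finitely_blind (\bigcup_(Q in F) Q) \/ F = set0.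
Proof.
move=> Fblind Ftot.
have [[Q0 FQ0]|F0] := pselect (F !=set0); last first.
  by right; apply/seteqP; split=> // Q FQ; apply: F0; exists Q.
left; split; first by move=> y [Q FQ Qy]; exact: (Fblind Q FQ).1.
move=> G fG GP.
have -> : (\bigcup_(Q in F) Q) `|` G = \bigcup_(X in [set Q `|` G | Q in F]) X.
  apply/seteqP; split=> y.
    case=> [[Q FQ Qy]|Gy]; first by exists (Q `|` G); [exists Q|left].
    by exists (Q0 `|` G); [exists Q0|right].
  by case=> _ [Q FQ <-] [Qy|Gy]; [left; exists Q|right].
rewrite (tdf_continuous kappa_tdf); last first.
- move=> _ _ [Q1 FQ1 <-] [Q2 FQ2 <-].
  by case: (Ftot Q1 Q2 FQ1 FQ2) => H; [left|right]; apply: setSU.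
- by exists (Q0 `|` G); exists Q0.
by case=> _ [Q FQ <-]; exact: (Fblind Q FQ).2.
Qed.

Lemma finitely_blind_add (Q : set tx) (y : tx) :
  finitely_blind Q -> P y -> finitely_blind (Q `|` [set y]).
Proof.
move=> [QP Qblind] Py; split; first by move=> z [/QP|->].
move=> G fG GP; rewrite -setUA; apply: Qblind.
  by rewrite finite_setU; split=> //; exact: finite_set1.
by move=> z [->|/GP].
Qed.

Lemma tdf_compact :
  kappa A P x -> exists2 R, finite_set R /\ R `<=` P & kappa A R x.
Proof.
move=> kPx; apply: contrapT => no_finite_cause.
have blind0 : finitely_blind set0.
  split=> // G fG GP; rewrite set0U => kGx.
  by apply: no_finite_cause; exists G.
have [Q [[QP Qblind] Qmax]] : exists Q, finitely_blind Q /\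
    forall B, Q `<` B -> ~ finitely_blind B.
  apply: Zorn_bigcup => F Fblind Ftot.
  by case: (finitely_blind_bigcup Fblind Ftot) => [//|->]; rewrite bigcup_set0.
have PQ : P `<=` Q.
  move=> y Py; apply: contrapT => nQy.
  apply: (Qmax (Q `|` [set y])); last exact: finitely_blind_add.
  by split; [exact: subsetUl|move=> /(_ y (or_intror erefl))].
apply: (Qblind set0) => //; rewrite setU0.
exact: (tdf_monotone kappa_tdf (@subset_refl _ A) PQ).
Qed.

End Compactness.

Lemma tdf_compact_seq (actor : choiceType) (tx : Type)
    (kappa : set actor -> set tx -> set tx) (kappa_tdf : tdf kappa)
    (A : set actor) (P : set tx) (Y : seq tx) :
  all_in (kappa A P) Y -> exists2 R, finite_set R /\ R `<=` P & all_in (kappa A R) Y.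
Proof.
have kappa_mono R R' : R `<=` R' -> kappa A R `<=` kappa A R'.
  exact: (tdf_monotone kappa_tdf (@subset_refl _ A)).
elim: Y => [|x Y IH] /=; first by move=> _; exists set0 => //; split.
case=> /(tdf_compact kappa_tdf) [R1 [fR1 R1P] kR1] /IH [R2 [fR2 R2P] kR2].
exists (R1 `|` R2); first by rewrite finite_setU; split=> // z [/R1P|/R2P].
split; first by apply: (kappa_mono R1) kR1 => z; left.
by apply: all_in_mono kR2; apply: kappa_mono => z; right.
Qed.

Lemma maxZ_eq (S : set int) (m : int) : is_max S m -> maxZ S = m.
Proof.
move=> Hm; apply: xget_unique => // y Hy.
by apply/Order.POrderTheory.le_anti; rewrite Hm.2 ?Hy.2 //; [exact: Hm.1|exact: Hy.1].
Qed.

Lemma maxZ_none (S : set int) : ~ (exists m, is_max S m) -> maxZ S = 0%R.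
Proof. by move=> noMax; apply: xgetPN => m Hm; apply: noMax; exists m. Qed.

Lemma maxZ_sub (S S' : set int) (m : int) :
  is_max S m -> S' `<=` S -> S' m -> maxZ S' = m.
Proof. by move=> [_ Smax] S'S S'm; apply: maxZ_eq; split=> // z /S'S /Smax. Qed.

Lemma MEV_set0 (actor : choiceType) (tok tx : Type) (wf : wallet tok -> nat)
    (kappa : set actor -> set tx -> set tx) (C : contract actor tok tx)
    (A : set actor) (s : bstate C) :
  MEV wf kappa A s set0 = 0%R.
Proof.
rewrite /MEV /xG /uG; set gains := [set gain wf A s Y | Y in _].
have [[u Hu]|noMax] := pselect (exists u, is_max gains u).
  rewrite (maxZ_eq Hu); apply: maxZ_eq; split.
    by case: Hu => -[Y HY <-] _; exists Y => //; rewrite GRing.subrr.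
  by move=> _ [Y HY <-]; rewrite Num.Theory.subr_le0; apply: Hu.2; exists Y.
rewrite (maxZ_none noMax); apply: maxZ_none => -[m [[Y HY <-] Hm]].
apply: noMax; exists (gain wf A s Y); split; first by exists Y.
move=> _ [Z HZ <-]; have := Hm (gain wf A s Z - 0)%R.
by rewrite !GRing.subr0; apply; exists Z => //; rewrite GRing.subr0.
Qed.

Theorem mainTheorem14 (actor : countType) (tok tx : Type)
    (actor_inf : infinite_set [set: actor])
    (wf : wallet tok -> nat) (wf_add : wealth_fun wf)
    (kappa : set actor -> set tx -> set tx) (kappa_tdf : tdf kappa)
    (C : contract actor tok tx) (Cbounded : bounded wf C)
    (A : set actor) (P : set tx) (s : bstate C) (s_reach : reachable s) :
  exists P0 : set tx, [/\ finite_set P0, P0 `<=` P &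
    MEV wf kappa A s P0 = MEV wf kappa A s P].
Proof.
set xgains := fun Q => [set xG wf kappa A s Y | Y in seq_over (kappa A Q)].
have [[m Hm]|noMax] := pselect (exists m, is_max (xgains P) m); last first.
  by exists set0; split=> //; rewrite MEV_set0 /MEV maxZ_none.
have [[Y HY Ym] _] := Hm.
have [P0 [fP0 P0P] HY0] := tdf_compact_seq kappa_tdf HY.
exists P0; split=> //; rewrite /MEV (maxZ_eq Hm).
apply: (maxZ_sub Hm) => [_ [Z HZ <-]|]; last by exists Y.
exists Z => //; apply: all_in_mono HZ.
exact: (tdf_monotone kappa_tdf (@subset_refl _ A) P0P).
Qed.
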